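(* Let $F$, $H$, $X$, $\Omega$, $Q$ and the sequences generated by the IneIREG method be as described in the context. Suppose: $(\eta_k)$ is nonincreasing; $\alpha_0\in[0,1]$ and $(\alpha_k/\eta_k)$ is nonincreasing; $\lambda_k\in[\underline\lambda,\overline\lambda]$ for all $k\ge0$ with $0<\underline\lambda\le\overline\lambda\le1/(L_F+\eta_0L_H)$; and $\sum_{k=0}^\infty\delta_k\eta_k^{-1}<+\infty$. For $k\ge1$ let $\Lambda_k=\sum_{j=0}^{k-1}\lambda_j$ and $\overline y_k=\Lambda_k^{-1}\sum_{j=0}^{k-1}\lambda_jy_j$. Then for all $k\ge1$, $$0\le\mathrm{Gap}(\overline y_k,F,X)\le\frac1k\Big(\frac{D_X^2}{2\underline\lambda}\Big)+\frac{\sum_{j=0}^{k-1}\delta_j}{k}\Big(\frac{1}{2\underline\lambda}\Big)+\frac{\sum_{j=0}^{k-1}\eta_j}{k}\Big(\frac{\overline\lambda C_HD_X}{\underline\lambda}\Big).$$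
   Context: Work in $\mathbb{R}^n$ with Euclidean inner product $\langle\cdot,\cdot\rangle$ and norm $\|\cdot\|$. The maps $F\colon \mathrm{Dom}\,F\to\mathbb{R}^n$ and $H\colon\mathrm{Dom}\,H\to\mathbb{R}^n$ are monotone and Lipschitz continuous with constants $L_F>0$ and $L_H>0$. $X$ is a nonempty compact convex set and $\Omega$ a nonempty closed convex set with $X\subset\Omega\subset\mathrm{Dom}\,F\cap\mathrm{Dom}\,H$; $P_X,P_\Omega$ denote orthogonal projections. $Q:=\{x\in X:\langle F(x),y-x\rangle\ge0\ \forall y\in X\}$ is assumed nonempty. $D_X:=\sup_{x,y\in X}\|x-y\|$, $C_H:=\sup_{x\in X}\|H(x)\|$. $\mathrm{Gap}(z,F,X):=\sup_{x\in X}\langle F(x),z-x\rangle$. IneIREG method: start with $x_0=x_{-1}\in X$; for $k=0,1,\dots$, with parameters $\alpha_k\ge0$, $\lambda_k>0$, $\eta_k>0$, set $w_k=x_k+\alpha_k(x_k-x_{k-1})$, $w'_k=P_\Omega(w_k)$, $y_k=P_X\big(w_k-\lambda_k(F(w'_k)+\eta_kH(w'_k))\big)$, $x_{k+1}=P_X\big(w_k-\lambda_k(F(y_k)+\eta_kH(y_k))\big)$. Also $\delta_k:=\alpha_k(1+\alpha_k)\|x_k-x_{k-1}\|^2$ for $k\ge0$. *)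

From HB Require Import structures.
From mathcomp Require Import all_boot all_order all_algebra.
From mathcomp Require Import all_classical all_reals all_analysis.
Set Implicit Arguments. Unset Strict Implicit. Unset Printing Implicit Defensive.
Import Order.TTheory GRing.Theory Num.Theory.
Import numFieldNormedType.Exports.
Local Open Scope classical_set_scope.
Local Open Scope ring_scope.

Section Defs.
Variables (R : realType) (n : nat).
Local Notation vec := 'rV[R]_n.

Definition dotp (u v : vec) : R := \sum_(i < n) u ord0 i * v ord0 i.
Definition enorm (u : vec) : R := Num.sqrt (dotp u u).

Definition convex_set_E (A : set vec) : Prop :=
  forall x y t, A x -> A y -> 0 <= t -> t <= 1 -> A (t *: x + (1 - t) *: y).

Definition monotone_op_on (D : set vec) (G : vec -> vec) : Prop :=
  forall x y, D x -> D y -> 0 <= dotp (G x - G y) (x - y).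

Definition lipschitz_op_on (D : set vec) (G : vec -> vec) (L : R) : Prop :=
  forall x y, D x -> D y -> enorm (G x - G y) <= L * enorm (x - y).

Definition is_projection (A : set vec) (P : vec -> vec) : Prop :=
  forall z, A (P z) /\ forall y, A y -> enorm (z - P z) <= enorm (z - y).

Definition VIsol (F : vec -> vec) (X : set vec) : set vec :=
  [set x | X x /\ forall y, X y -> 0 <= dotp (F x) (y - x)].

Definition Gap (z : vec) (F : vec -> vec) (X : set vec) : R :=
  sup [set r | exists2 x, X x & r = dotp (F x) (z - x)].

Definition diam (X : set vec) : R :=
  sup [set r | exists x y, [/\ X x, X y & r = enorm (x - y)]].

Definition supnorm (X : set vec) (H : vec -> vec) : R :=
  sup [set r | exists2 x, X x & r = enorm (H x)].

End Defs.

(* Each IneIREG iteration is an extragradient step from the inertial point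
   w_k = x_k + alpha_k (x_k - x_(k-1)).  The variational inequalities of the three
   projections, the (L_F + eta_k L_H)-Lipschitz continuity of F + eta_k H and
   lambda_k (L_F + eta_k L_H) <= 1 give, for every u in X,
     |x_(k+1) - u|^2 <= |w_k - u|^2 + 2 lambda_k <F y_k + eta_k H y_k, u - y_k>,
   and monotonicity of F bounds <F y_k, u - y_k> by -<F u, y_k - u>.  Expanding
   |w_k - u|^2 = |x_k - u|^2 + alpha_k (|x_k - u|^2 - |x_(k-1) - u|^2) + delta_k, the
   inertial terms telescope because alpha_k is nonincreasing (as alpha_k / eta_k
   and eta_k are) with alpha_0 <= 1.
   Summing over j < k bounds Lambda_k <F u, ybar_k - u> uniformly in u, and
   Lambda_k >= k lambda_lo yields the bound on the gap; evaluating at a solution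
   of the variational inequality shows that the gap is nonnegative. *)

From HB Require Import structures.
From mathcomp Require Import all_boot all_order all_algebra.
From mathcomp Require Import all_classical all_reals all_analysis.
From mathcomp Require Import ring lra.
Set Implicit Arguments. Unset Strict Implicit. Unset Printing Implicit Defensive.
Import Order.TTheory GRing.Theory Num.Theory.
Import numFieldNormedType.Exports.
Local Open Scope classical_set_scope.
Local Open Scope ring_scope.

Section InnerProduct.
Variables (R : realType) (n : nat).
Local Notation vec := 'rV[R]_n.
Local Notation nsq u := (dotp u u).
Implicit Types (u v w z : vec) (a : R).

Lemma dotpC u v : dotp u v = dotp v u.
Proof. by apply: eq_bigr => i _; rewrite mulrC. Qed.

Lemma dotpDl u v w : dotp (u + v) w = dotp u w + dotp v w.
Proof. by rewrite /dotp -big_split; apply: eq_bigr => i _; rewrite mxE mulrDl. Qed.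

Lemma dotpZl a u v : dotp (a *: u) v = a * dotp u v.
Proof. by rewrite /dotp mulr_sumr; apply: eq_bigr => i _; rewrite mxE mulrA. Qed.

Lemma dotpNl u v : dotp (- u) v = - dotp u v.
Proof. by rewrite -scaleN1r dotpZl mulN1r. Qed.

Lemma dotpBl u v w : dotp (u - v) w = dotp u w - dotp v w.
Proof. by rewrite dotpDl dotpNl. Qed.

Lemma dotpDr u v w : dotp u (v + w) = dotp u v + dotp u w.
Proof. by rewrite dotpC dotpDl !(dotpC u). Qed.

Lemma dotpZr a u v : dotp u (a *: v) = a * dotp u v.
Proof. by rewrite dotpC dotpZl dotpC. Qed.

Lemma dotpNr u v : dotp u (- v) = - dotp u v.
Proof. by rewrite dotpC dotpNl dotpC. Qed.

Lemma dotpBr u v w : dotp u (v - w) = dotp u v - dotp u w.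
Proof. by rewrite dotpDr dotpNr. Qed.

Lemma dotp0r u : dotp u 0 = 0.
Proof. by rewrite -(scale0r 0) dotpZr mul0r. Qed.

Lemma dotp_sumr u (f : nat -> vec) k :
  dotp u (\sum_(j < k) f j) = \sum_(j < k) dotp u (f j).
Proof.
elim: k => [|k IH]; first by rewrite !big_ord0 dotp0r.
by rewrite !big_ord_recr /= dotpDr IH.
Qed.

Lemma dotp_ge0 u : 0 <= nsq u.
Proof. by rewrite sumr_ge0 // => i _; rewrite -expr2 sqr_ge0. Qed.

Lemma dotp_eq0 u : (nsq u == 0) = (u == 0).
Proof.
apply/eqP/eqP => [u0|->]; last exact: dotp0r.
apply/rowP => i; rewrite mxE; apply/eqP; rewrite -sqrf_eq0; apply/eqP.
apply: (psumr_eq0P (P := xpredT) (F := fun j => u 0 j ^+ 2)) => // j _.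
exact: sqr_ge0.
Qed.

Lemma nsqD u v : nsq (u + v) = nsq u + 2 * dotp u v + nsq v.
Proof. by rewrite !dotpDl !dotpDr (dotpC v u); ring. Qed.

Lemma nsqB u v : nsq (u - v) = nsq u - 2 * dotp u v + nsq v.
Proof. by rewrite nsqD dotpNr dotpNl dotpNr opprK mulrN. Qed.

Lemma nsq_subC u v : nsq (u - v) = nsq (v - u).
Proof. by rewrite -opprB dotpNl dotpNr opprK. Qed.

Lemma law_of_cosines z u v :
  nsq (u - v) = nsq (u - z) - 2 * dotp (u - z) (v - z) + nsq (v - z).
Proof. by rewrite -nsqB opprB addrA subrK. Qed.

Lemma nsq_extrapolate a u v z :
  nsq (u + a *: (u - v) - z)
  = nsq (u - z) + a * (nsq (u - z) - nsq (v - z)) + a * (1 + a) * nsq (u - v).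
Proof.
have -> : u + a *: (u - v) - z = (u - z) + a *: ((u - z) - (v - z)).
  by apply/rowP => i; rewrite !mxE; ring.
have -> : u - v = (u - z) - (v - z) by apply/rowP => i; rewrite !mxE; ring.
move: (u - z) (v - z) => p q.
by rewrite nsqD !dotpZl !dotpZr dotpBr !nsqB; ring.
Qed.

Lemma enorm_ge0 u : 0 <= enorm u.
Proof. exact: sqrtr_ge0. Qed.

Lemma enorm_sqr u : enorm u ^+ 2 = nsq u.
Proof. by rewrite sqr_sqrtr // dotp_ge0. Qed.

Lemma enormN u : enorm (- u) = enorm u.
Proof. by rewrite /enorm dotpNl dotpNr opprK. Qed.

Lemma enormZ a u : enorm (a *: u) = `|a| * enorm u.
Proof. by rewrite /enorm dotpZl dotpZr mulrA -expr2 sqrtrM ?sqr_ge0 // sqrtr_sqr. Qed.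

Lemma cauchy_schwarz u v : dotp u v <= enorm u * enorm v.
Proof.
have [->|v0] := eqVneq v 0; first by rewrite dotp0r mulr_ge0 ?enorm_ge0.
have vpos : 0 < nsq v by rewrite lt0r dotp_eq0 v0 dotp_ge0.
have sq_le : dotp u v ^+ 2 <= nsq u * nsq v.
  have := dotp_ge0 (nsq v *: u - dotp u v *: v).
  rewrite nsqB !dotpZl !dotpZr => h.
  have : 0 <= nsq v * (nsq u * nsq v - dotp u v ^+ 2) by nra.
  by rewrite pmulr_rge0 // subr_ge0.
rewrite /enorm -sqrtrM ?dotp_ge0 //; apply: le_trans (ler_norm _) _.
by rewrite -sqrtr_sqr ler_wsqrtr.
Qed.

Lemma ler_enormD u v : enorm (u + v) <= enorm u + enorm v.
Proof.
rewrite -(ler_pXn2r (_ : 0 < 2)%N) ?nnegrE ?addr_ge0 ?enorm_ge0 //.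
by rewrite enorm_sqr nsqD -!enorm_sqr; have := cauchy_schwarz u v; nra.
Qed.

Lemma dotp_mean (l : nat -> R) (f : nat -> vec) g z k :
  \sum_(j < k) l j != 0 ->
  (\sum_(j < k) l j) * dotp g ((\sum_(j < k) l j)^-1 *: \sum_(j < k) l j *: f j - z)
  = \sum_(j < k) l j * dotp g (f j - z).
Proof.
move=> Lam0; rewrite dotpBr dotpZr (dotp_sumr _ (fun j => l j *: f j)) mulrBr mulrA mulfV // mul1r.
rewrite mulr_suml -sumrB; apply: eq_bigr => j _; by rewrite dotpZr dotpBr mulrBr.
Qed.

(* The hypotheses are the obtuse-angle characterizations of [yk] and [x1] as the
   projections of [w - lam g1] and [w - lam g2], and of [w'] as a projection of
   [w] onto a set containing [yk]; [g1] is the operator evaluated at [w']. *)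
Lemma extragradient_step (w w' yk x1 u g1 g2 : vec) (lam L : R) :
  dotp (w - lam *: g1 - yk) (x1 - yk) <= 0 ->
  dotp (w - lam *: g2 - x1) (u - x1) <= 0 ->
  dotp (w - w') (yk - w') <= 0 ->
  enorm (g2 - g1) <= L * enorm (yk - w') ->
  0 <= lam -> lam * L <= 1 ->
  nsq (x1 - u) <= nsq (w - u) + 2 * lam * dotp g2 (u - yk).
Proof.
move=> proj_yk proj_x1 proj_w' lip lam0 lamL.
have {}proj_yk : dotp (w - yk) (x1 - yk) <= lam * dotp g1 (x1 - yk).
  by rewrite addrAC dotpBl dotpZl subr_le0 in proj_yk.
have {}proj_x1 :
    dotp (w - x1) (u - x1) <= lam * (dotp g2 (u - yk) - dotp g2 (x1 - yk)).
  rewrite -dotpBr opprB addrA subrK.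
  by rewrite addrAC dotpBl dotpZl subr_le0 in proj_x1.
have near_w : nsq (yk - w') <= nsq (w - yk).
  by rewrite [X in _ <= X](law_of_cosines w'); have := dotp_ge0 (w - w'); lra.
have lip2 : lam ^+ 2 * nsq (g2 - g1) <= nsq (yk - w').
  rewrite -!enorm_sqr -exprMn lerXn2r ?nnegrE ?mulr_ge0 ?enorm_ge0 //.
  apply: le_trans (ler_wpM2l lam0 lip) _; rewrite mulrA.
  by rewrite ler_piMl ?enorm_ge0.
(* Young's inequality absorbs the cross term [2 lam <g2 - g1, x1 - yk>]. *)
have young := dotp_ge0 (lam *: (g2 - g1) + (x1 - yk)).
rewrite nsqD !dotpZl dotpZr mulrA -expr2 [dotp (g2 - g1) (x1 - yk)]dotpBl in young.
rewrite nsq_subC (law_of_cosines x1 w u) (law_of_cosines yk w x1).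
lra.
Qed.

End InnerProduct.

Section Projection.
Variables (R : realType) (n : nat).
Local Notation vec := 'rV[R]_n.
Local Notation nsq u := (dotp u u).

Lemma proj_dotp_le0 (A : set vec) (P : vec -> vec) z a :
  convex_set_E A -> is_projection A P -> A a -> dotp (z - P z) (a - P z) <= 0.
Proof.
move=> convA projA Aa; have [AP Pmin] := projA z.
set p := P z in AP Pmin *; set e := z - p; set d := a - p.
rewrite leNgt; apply/negP => c_gt0; set c := dotp e d in c_gt0.
have den_gt0 : 0 < c + nsq d by rewrite ltr_wpDr ?dotp_ge0.
pose t := c / (c + nsq d).
have t_gt0 : 0 < t by rewrite divr_gt0.
have t_le1 : t <= 1 by rewrite ler_pdivrMr // mul1r lerDl dotp_ge0.
have tc : t * (c + nsq d) = c by rewrite mulfVK ?gt_eqF.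
(* For [c > 0] the point at parameter [t] on the segment from [p] to [a] would be
   strictly closer to [z] than [p]. *)
have := Pmin _ (convA a p t Aa AP (ltW t_gt0) t_le1).
have -> : z - (t *: a + (1 - t) *: p) = e - t *: d.
  by apply/rowP => i; rewrite !mxE; ring.
rewrite -(ler_pXn2r (_ : 0 < 2)%N) ?nnegrE ?enorm_ge0 // !enorm_sqr.
by rewrite -[z - p]/e [nsq (e - _)]nsqB !dotpZl !dotpZr -/c; nra.
Qed.

End Projection.

Section Operators.
Variables (R : realType) (n : nat).
Local Notation vec := 'rV[R]_n.
Implicit Types (A B : set vec) (G : vec -> vec).

Lemma sub_monotone_op_on A B G : A `<=` B -> monotone_op_on B G -> monotone_op_on A G.
Proof. by move=> AB monG u v Au Av; apply: monG; apply: AB. Qed.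

Lemma sub_lipschitz_op_on A B G L :
  A `<=` B -> lipschitz_op_on B G L -> lipschitz_op_on A G L.
Proof. by move=> AB lipG u v Au Av; apply: lipG; apply: AB. Qed.

Lemma lipschitz_op_onDZ A G1 G2 L1 L2 e : 0 <= e ->
  lipschitz_op_on A G1 L1 -> lipschitz_op_on A G2 L2 ->
  lipschitz_op_on A (fun z => G1 z + e *: G2 z) (L1 + e * L2).
Proof.
move=> e_ge0 lip1 lip2 u v Au Av.
rewrite opprD addrACA -scalerBr mulrDl -mulrA.
apply: le_trans (ler_enormD _ _) _; rewrite enormZ ger0_norm //.
by apply: lerD; [exact: lip1 | apply: ler_wpM2l => //; exact: lip2].
Qed.

Lemma compact_enorm_bounded A : compact A -> exists M, forall u, A u -> enorm u <= M.
Proof.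
move=> /compact_bounded [M0 [_ M0A]]; pose N := `|M0| + 1.
have uN u : A u -> `|u| <= N.
  by apply: M0A; apply: le_lt_trans (ler_norm M0) _; rewrite ltrDl.
exists (Num.sqrt (n%:R * N ^+ 2)) => u /uN un; apply: ler_wsqrtr.
rewrite mulr_natl -[in X in _ *+ X](card_ord n) -sumr_const; apply: ler_sum => i _.
rewrite -expr2 -real_normK ?num_real // lerXn2r ?nnegrE ?(le_trans _ un) //.
rewrite [X in _ <= X]mx_normrE.
exact: (le_bigmax _ (fun ij : 'I_1 * 'I_n => `|u ij.1 ij.2|) (ord0, i)).
Qed.

Lemma enorm_sub_le_diam A u v : compact A -> A u -> A v -> enorm (u - v) <= diam A.
Proof.
move=> /compact_enorm_bounded [M AM] Au Av.
apply: sup_upper_bound; last by exists u, v.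
split; first by exists (enorm (u - v)), u, v.
exists (M + M) => _ [p [q [Ap Aq ->]]].
by apply: le_trans (ler_enormD _ _) _; rewrite enormN lerD ?AM.
Qed.

Lemma enorm_le_supnorm A G L u :
  compact A -> lipschitz_op_on A G L -> A u -> enorm (G u) <= supnorm A G.
Proof.
move=> /compact_enorm_bounded [M AM] lipG Au.
apply: sup_upper_bound; last by exists u.
split; first by exists (enorm (G u)), u.
exists (enorm (G u) + `|L| * (M + M)) => _ [v Av ->].
rewrite -[G v](subrK (G u)) addrC; apply: le_trans (ler_enormD _ _) _.
rewrite lerD2l; apply: le_trans (lipG _ _ Av Au) _.
apply: le_trans (ler_wpM2r (enorm_ge0 _) (ler_norm L)) _; apply: ler_wpM2l => //.
by apply: le_trans (ler_enormD _ _) _; rewrite enormN lerD ?AM.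
Qed.

Lemma Gap_le A G z b : A !=set0 ->
  (forall u, A u -> dotp (G u) (z - u) <= b) -> Gap z G A <= b.
Proof.
move=> [u Au] ub; apply: ge_sup => [|_ [v Av ->]]; last exact: ub.
by exists (dotp (G u) (z - u)), u.
Qed.

Lemma le_Gap A G z b u : (forall v, A v -> dotp (G v) (z - v) <= b) ->
  A u -> dotp (G u) (z - u) <= Gap z G A.
Proof.
move=> ub Au; apply: sup_upper_bound; last by exists u.
split; first by exists (dotp (G u) (z - u)), u.
by exists b => _ [v Av ->]; exact: ub.
Qed.

End Operators.

Section Sequences.
Variable R : realFieldType.
Implicit Types (a e phi : nat -> R).

Lemma nonincreasing_of_ratio a e : (forall k, 0 <= a k) -> (forall k, 0 < e k) ->
  (forall k, e k.+1 <= e k) -> (forall k, a k.+1 / e k.+1 <= a k / e k) ->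
  forall k, a k.+1 <= a k.
Proof.
move=> a_ge0 e_gt0 e_nonincr ratio k.
have := ratio k; rewrite ler_pdivrMr // => /le_trans; apply.
rewrite -[leRHS](divfK (lt0r_neq0 (e_gt0 k))).
apply: ler_wpM2l (e_nonincr k); rewrite divr_ge0 //; exact: ltW.
Qed.

Lemma inertial_telescope phi a M m : (forall j, 0 <= phi j <= M) ->
  (forall j, 0 <= a j) -> (forall j, a j.+1 <= a j) -> a 0%N <= 1 ->
  \sum_(j < m) (phi j - phi j.+1 + a j * (phi j - phi j.-1)) <= M.
Proof.
move=> phi_bnd a_ge0 a_nonincr a0_le1.
(* Abel summation, keeping the boundary term [phi m - a (m-1) phi (m-1)]. *)
suff : \sum_(j < m) (phi j - phi j.+1 + a j * (phi j - phi j.-1))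
       + phi m - a m.-1 * phi m.-1 <= (1 - a m.-1) * M.
  by have := phi_bnd m; have := phi_bnd m.-1; have := a_ge0 m.-1; nra.
elim: m => [|m IH]; first by rewrite big_ord0; have := phi_bnd 0%N; nra.
rewrite big_ord_recr /=.
have a_le : a m <= a m.-1 by case: m {IH}.
by have := phi_bnd m.-1; have := a_ge0 m; nra.
Qed.

Lemma step_size_le1 (lambda eta : nat -> R) (LF LH lam_hi : R) :
  0 < LF -> 0 <= LH -> (forall k, 0 <= lambda k) -> (forall k, lambda k <= lam_hi) ->
  (forall k, 0 <= eta k) -> (forall k, eta k.+1 <= eta k) ->
  lam_hi <= 1 / (LF + eta 0%N * LH) ->
  forall k, lambda k * (LF + eta k * LH) <= 1.
Proof.
move=> LF_gt0 LH_ge0 lambda_ge0 lambda_le eta_ge0 eta_nonincr hi_le k.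
have L0_gt0 : 0 < LF + eta 0%N * LH by rewrite ltr_wpDr // mulr_ge0.
have eta_le : eta k <= eta 0%N := (nonincreasing_seqP eta).1 eta_nonincr 0%N k (leq0n k).
apply: (@le_trans _ _ (lam_hi * (LF + eta 0%N * LH))); last by rewrite -ler_pdivlMr.
apply: ler_pM => //; first exact: addr_ge0 (ltW LF_gt0) (mulr_ge0 (eta_ge0 k) LH_ge0).
by rewrite lerD2l; exact: ler_wpM2r.
Qed.

End Sequences.

Section IneIREG.
Variables (R : realType) (n : nat).
Local Notation vec := 'rV[R]_n.
Local Notation nsq u := (dotp u u).
Variables (F H : vec -> vec) (X Omega : set vec) (PX POm : vec -> vec).
Variables (LF LH C D : R) (alpha lambda eta : nat -> R) (x y : nat -> vec).
Hypotheses (convX : convex_set_E X) (convOm : convex_set_E Omega) (XOm : X `<=` Omega).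
Hypotheses (projX : is_projection X PX) (projOm : is_projection Omega POm).
Hypotheses (monF : monotone_op_on X F).
Hypotheses (lipF : lipschitz_op_on Omega F LF) (lipH : lipschitz_op_on Omega H LH).
Hypothesis diam_le : forall u v, X u -> X v -> enorm (u - v) <= D.
Hypothesis H_le : forall u, X u -> enorm (H u) <= C.
Hypotheses (alpha_ge0 : forall k, 0 <= alpha k)
  (alpha_nonincr : forall k, alpha k.+1 <= alpha k) (alpha0_le1 : alpha 0%N <= 1).
Hypotheses (lambda_gt0 : forall k, 0 < lambda k) (eta_ge0 : forall k, 0 <= eta k).
Hypothesis step_size : forall k, lambda k * (LF + eta k * LH) <= 1.
Hypothesis x0_in_X : X (x 0%N).
Hypothesis ineireg : forall k : nat,
  let w := x k + alpha k *: (x k - x k.-1) in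
  let w' := POm w in
  y k = PX (w - lambda k *: (F w' + eta k *: H w')) /\
  x k.+1 = PX (w - lambda k *: (F (y k) + eta k *: H (y k))).

Local Notation delta j := (alpha j * (1 + alpha j) * enorm (x j - x j.-1) ^+ 2).

Lemma x_in_X k : X (x k).
Proof. by case: k => [//|k]; rewrite (ineireg k).2; exact: (projX _).1. Qed.

Lemma y_in_X k : X (y k).
Proof. by rewrite (ineireg k).1; exact: (projX _).1. Qed.

Lemma D_ge0 : 0 <= D.
Proof. exact: le_trans (enorm_ge0 _) (diam_le x0_in_X x0_in_X). Qed.

Lemma C_ge0 : 0 <= C.
Proof. exact: le_trans (enorm_ge0 _) (H_le x0_in_X). Qed.

Lemma ineireg_step k u : X u ->
  2 * lambda k * dotp (F u) (y k - u) <=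
  nsq (x k + alpha k *: (x k - x k.-1) - u) - nsq (x k.+1 - u)
  + 2 * lambda k * eta k * (C * D).
Proof.
move=> Xu; have [def_y def_x] := ineireg k.
set w := x k + _ in def_y def_x *; set w' := POm w in def_y.
have Xy := y_in_X k.
have descent : nsq (x k.+1 - u)
    <= nsq (w - u) + 2 * lambda k * dotp (F (y k) + eta k *: H (y k)) (u - y k).
  apply: (@extragradient_step _ _ w w' (y k) (x k.+1) u (F w' + eta k *: H w') _ _
            (LF + eta k * LH)); last 2 first.
  - exact: ltW.
  - exact: step_size.
  - by rewrite def_y; exact: proj_dotp_le0 convX projX (x_in_X _).
  - by rewrite def_x; exact: proj_dotp_le0 convX projX Xu.
  - exact: proj_dotp_le0 convOm projOm (XOm Xy).
  - exact: (lipschitz_op_onDZ (eta_ge0 k) lipF lipH) (XOm Xy) (projOm w).1.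
have monotone : dotp (F (y k)) (u - y k) <= - dotp (F u) (y k - u).
  by rewrite -dotpNr opprB -subr_ge0 -dotpBl; exact: monF.
have bounded : dotp (H (y k)) (u - y k) <= C * D.
  apply: le_trans (cauchy_schwarz _ _) _.
  by apply: ler_pM; rewrite ?enorm_ge0 ?H_le ?diam_le.
rewrite [dotp (F (y k) + _) _]dotpDl dotpZl in descent.
have := ler_wpM2l (ltW (lambda_gt0 k)) monotone.
have := ler_wpM2l (mulr_ge0 (ltW (lambda_gt0 k)) (eta_ge0 k)) bounded.
lra.
Qed.

Lemma ineireg_sum k u : X u ->
  2 * \sum_(j < k) lambda j * dotp (F u) (y j - u) <=
  D ^+ 2 + \sum_(j < k) delta j + 2 * (C * D) * \sum_(j < k) lambda j * eta j.
Proof.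
move=> Xu; pose phi j := nsq (x j - u).
have phi_bnd j : 0 <= phi j <= D ^+ 2.
  rewrite /phi dotp_ge0 -enorm_sqr lerXn2r ?nnegrE ?enorm_ge0 ?D_ge0 //.
  exact: diam_le (x_in_X j) Xu.
have step j : 2 * (lambda j * dotp (F u) (y j - u))
    <= phi j - phi j.+1 + alpha j * (phi j - phi j.-1) + delta j
       + 2 * (C * D) * (lambda j * eta j).
  by have := ineireg_step j Xu; rewrite nsq_extrapolate enorm_sqr /phi; lra.
rewrite mulr_sumr (le_trans (ler_sum _ (fun (j : 'I_k) _ => step j))) //.
rewrite big_split big_split /= -!mulr_sumr !lerD2r.
exact: inertial_telescope phi_bnd alpha_ge0 alpha_nonincr alpha0_le1.
Qed.

Lemma ineireg_gap_bound k (lam_lo lam_hi : R) :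
  (1 <= k)%N -> 0 < lam_lo -> (forall j, lam_lo <= lambda j <= lam_hi) ->
  VIsol F X !=set0 ->
  let Lam := \sum_(j < k) lambda j in
  let ybar := Lam^-1 *: \sum_(j < k) lambda j *: y j in
  0 <= Gap ybar F X /\
  Gap ybar F X <=
    k%:R^-1 * (D ^+ 2 / (2 * lam_lo))
    + (\sum_(j < k) delta j) / k%:R * (1 / (2 * lam_lo))
    + (\sum_(j < k) eta j) / k%:R * (lam_hi * C * D / lam_lo).
Proof.
move=> k_ge1 lo_gt0 lam_bnd [xs [Xxs xs_sol]] Lam ybar.
have k_gt0 : 0 < k%:R :> R by rewrite ltr0n.
have Lam_ge : k%:R * lam_lo <= Lam.
  rewrite mulr_natl -(card_ord k) -sumr_const; apply: ler_sum => j _.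
  by case/andP: (lam_bnd j).
have Lam_gt0 : 0 < Lam by apply: lt_le_trans Lam_ge; rewrite mulr_gt0.
have mean u : Lam * dotp (F u) (ybar - u) = \sum_(j < k) lambda j * dotp (F u) (y j - u).
  by apply: dotp_mean; rewrite gt_eqF.
set S := D ^+ 2 + \sum_(j < k) delta j + 2 * (C * D) * (lam_hi * \sum_(j < k) eta j).
have S_ge0 : 0 <= S.
  have hi_ge0 : 0 <= lam_hi by case/andP: (lam_bnd 0%N) => *; lra.
  have delta_ge0 : 0 <= \sum_(j < k) delta j.
    by apply: sumr_ge0 => j _; rewrite !mulr_ge0 ?exprn_ge0 ?enorm_ge0 ?addr_ge0.
  have eta_sum_ge0 : 0 <= \sum_(j < k) eta j by apply: sumr_ge0 => j _.
  by rewrite !addr_ge0 ?sqr_ge0 // !mulr_ge0 ?D_ge0 ?C_ge0.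
have ub u : X u -> dotp (F u) (ybar - u) <= S / (2 * (k%:R * lam_lo)).
  move=> Xu; apply: (@le_trans _ _ (S / (2 * Lam))).
    rewrite ler_pdivlMr ?mulr_gt0 // mulrC -mulrA mean.
    apply: le_trans (ineireg_sum k Xu) _; rewrite lerD2l ler_wpM2l ?mulr_ge0 ?D_ge0 ?C_ge0 //.
    rewrite mulr_sumr; apply: ler_sum => j _; rewrite ler_wpM2r ?eta_ge0 //.
    by case/andP: (lam_bnd j).
  by rewrite ler_wpM2l // lef_pV2 ?posrE ?mulr_gt0 // ler_pM2l.
set B := (X in _ /\ _ <= X).
have -> : B = S / (2 * (k%:R * lam_lo)).
  by rewrite /B /S; field; rewrite ?pnatr_eq0 -?lt0n ?gt_eqF.
split; last by apply: Gap_le ub; exists xs.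
apply: le_trans (le_Gap ub Xxs); rewrite -(pmulr_rge0 _ Lam_gt0) mean.
by apply: sumr_ge0 => j _; apply: mulr_ge0; [exact: ltW | exact: xs_sol (y_in_X j)].
Qed.

End IneIREG.

Theorem proposition3p5 (R : realType) (n : nat)
  (F H : 'rV[R]_n -> 'rV[R]_n) (DomF DomH X Omega : set 'rV[R]_n)
  (LF LH : R) (PX POm : 'rV[R]_n -> 'rV[R]_n)
  (alpha lambda eta : nat -> R) (lam_lo lam_hi : R)
  (x y : nat -> 'rV[R]_n) :
  monotone_op_on DomF F -> monotone_op_on DomH H ->
  0 < LF -> 0 < LH -> lipschitz_op_on DomF F LF -> lipschitz_op_on DomH H LH ->
  X !=set0 -> compact X -> convex_set_E X ->
  Omega !=set0 -> closed Omega -> convex_set_E Omega ->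
  X `<=` Omega -> Omega `<=` DomF `&` DomH ->
  is_projection X PX -> is_projection Omega POm ->
  VIsol F X !=set0 ->
  (forall k, 0 <= alpha k) -> (forall k, 0 < lambda k) -> (forall k, 0 < eta k) ->
  (* IneIREG iterates, with x_{-1} = x_0 encoded as x (0.-1) = x 0 *)
  X (x 0%N) ->
  (forall k : nat,
     let w := x k + alpha k *: (x k - x k.-1) in
     let w' := POm w in
     y k = PX (w - lambda k *: (F w' + eta k *: H w')) /\
     x k.+1 = PX (w - lambda k *: (F (y k) + eta k *: H (y k)))) ->
  (* hypotheses of the proposition *)
  (forall k, eta k.+1 <= eta k) ->
  0 <= alpha 0%N <= 1 ->
  (forall k, alpha k.+1 / eta k.+1 <= alpha k / eta k) ->
  (forall k, lam_lo <= lambda k <= lam_hi) ->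
  0 < lam_lo -> lam_lo <= lam_hi -> lam_hi <= 1 / (LF + eta 0%N * LH) ->
  (let delta k := alpha k * (1 + alpha k) * enorm (x k - x k.-1) ^+ 2 in
   cvgn (series (fun k => delta k / eta k))) ->
  forall k : nat, (1 <= k)%N ->
    let delta j := alpha j * (1 + alpha j) * enorm (x j - x j.-1) ^+ 2 in
    let Lam := \sum_(j < k) lambda j in
    let ybar := Lam^-1 *: \sum_(j < k) lambda j *: y j in
    0 <= Gap ybar F X /\
    Gap ybar F X <=
      k%:R^-1 * (diam X ^+ 2 / (2 * lam_lo))
      + (\sum_(j < k) delta j) / k%:R * (1 / (2 * lam_lo))
      + (\sum_(j < k) eta j) / k%:R * (lam_hi * supnorm X H * diam X / lam_lo).
Proof.
move=> monF _ LF_gt0 LH_gt0 lipF lipH _ compactX convX _ _ convOm XOm OmD projX projOm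
  VIne alpha_ge0 lambda_gt0 eta_gt0 x0_in_X ineireg eta_nonincr /andP[_ alpha0_le1]
  ratio_nonincr lam_bnd lo_gt0 _ hi_le _ k k_ge1.
have lambda_le j : lambda j <= lam_hi by case/andP: (lam_bnd j).
have OmF : Omega `<=` DomF by move=> u /OmD[].
have OmH : Omega `<=` DomH by move=> u /OmD[].
exact: (ineireg_gap_bound convX convOm XOm projX projOm
  (sub_monotone_op_on (subset_trans XOm OmF) monF)
  (sub_lipschitz_op_on OmF lipF) (sub_lipschitz_op_on OmH lipH)
  (fun u v => enorm_sub_le_diam compactX)
  (fun u => enorm_le_supnorm compactX (sub_lipschitz_op_on (subset_trans XOm OmH) lipH))
  alpha_ge0 (nonincreasing_of_ratio alpha_ge0 eta_gt0 eta_nonincr ratio_nonincr)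
  alpha0_le1 lambda_gt0 (fun j => ltW (eta_gt0 j))
  (step_size_le1 LF_gt0 (ltW LH_gt0) (fun j => ltW (lambda_gt0 j)) lambda_le
     (fun j => ltW (eta_gt0 j)) eta_nonincr hi_le)
  x0_in_X ineireg k_ge1 lo_gt0 lam_bnd VIne).
Qed.
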